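(* Let $d\ge2$ be an integer and $\delta\in(0,d]$ real. Let $P$ be a set of $n$ points in $\mathbb{R}^d$ with $\dim_{\mathsf f}(P)=\delta$ and let $D=\{\mathrm{ball}(x,1):x\in P\}$. Let $D'\subseteq D$ consist of $k$ pairwise disjoint balls. Then there exist $c\in\mathbb{R}^d$ and $r>0$ such that at most $H$ balls of $D'$ intersect $\mathrm{sphere}(c,r)$, and at most $(1-2^{-O(d)})k$ balls of $D'$ are contained in the interior of $\mathrm{sphere}(c,r)$ and at most $(1-2^{-O(d)})k$ in its exterior, where $H=O(k^{1-1/\delta})$ if $\delta>1$ and $H=O(1)$ if $\delta\le1$.
   Context: $\mathrm{ball}(x,r)$ and $\mathrm{sphere}(x,r)$ denote the closed Euclidean ball and the sphere of radius $r$ centered at $x$. Fractal dimension: for a family of finite pointsets $P\subseteq\mathbb{R}^d$ (with $|P|$ unbounded), $\dim_{\mathsf f}(P)$ is the infimum of $\delta$ such that there is a constant $c_0$ with: for every member $P$, every $\varepsilon>0$, every $r\ge2\varepsilon$, every $\varepsilon$-net $N$ of $P$ (a subset of $P$ whose points are pairwise at distance $\ge\varepsilon$ and such that every point of $P$ is within distance $\varepsilon$ of $N$) and every $x$, $|N\cap\mathrm{ball}(x,r)|\le c_0(r/\varepsilon)^\delta$. Hidden constants may depend on $d,\delta,c_0$. *)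

(* points of R^d are lists of reals of length d. *)
From Stdlib Require Export Reals List.
Export ListNotations.
Open Scope R_scope.

Definition in_Rd (d : nat) (x : list R) : Prop := length x = d.

Definition dist (x y : list R) : R :=
  sqrt (fold_right Rplus 0 (map (fun p => (fst p - snd p) ^ 2) (combine x y))).

Definition ball (d : nat) (x : list R) (r : R) (y : list R) : Prop :=
  in_Rd d y /\ dist x y <= r.
Definition sphere (d : nat) (x : list R) (r : R) (y : list R) : Prop :=
  in_Rd d y /\ dist x y = r.

Definition at_most (L : list (list R)) (Q : list R -> Prop) (m : R) : Prop :=
  forall S : list (list R), NoDup S -> incl S L -> (forall y, In y S -> Q y) ->
    INR (length S) <= m.

Definition is_net (eps : R) (N P : list (list R)) : Prop :=
  incl N P /\
  (forall p q, In p N -> In q N -> p <> q -> eps <= dist p q) /\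
  (forall p, In p P -> exists q, In q N /\ dist p q <= eps).

(* the defining bound of fractal dimension delta with constant c0 *)
Definition frac_bound (d : nat) (delta c0 : R) (P : list (list R)) : Prop :=
  forall (eps r : R) (N : list (list R)) (x : list R),
    0 < eps -> 2 * eps <= r -> is_net eps N P -> in_Rd d x ->
    at_most N (ball d x r) (c0 * Rpower (r / eps) delta).

Definition ball_meets_sphere (d : nat) (c : list R) (r : R) (a : list R) : Prop :=
  exists y, ball d a 1 y /\ sphere d c r y.
Definition ball_inside (d : nat) (c : list R) (r : R) (a : list R) : Prop :=
  forall y, ball d a 1 y -> dist c y < r.
Definition ball_outside (d : nat) (c : list R) (r : R) (a : list R) : Prop :=
  forall y, ball d a 1 y -> r < dist c y.

Definition H_bound (CH delta k : R) : R :=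
  if Rlt_dec 1 delta then CH * Rpower k (1 - 1 / delta) else CH.

(* With few balls (k <= 2^(8d)) a unit
   sphere around one centre separates it from the rest. Otherwise put m = k / 2^(8d) + 1 and
   let R0 be the least radius of a ball around a centre containing m centres. Lattice cells of
   diameter R0 / 2 hold fewer than m centres each, and 2^O(d) of them cover the concentric
   ball of radius 2 R0, which therefore holds at most (2^(8d) - 1)(m - 1) centres; a sphere
   of radius between R0 + 1 and 2 R0 - 1 thus has few balls inside, and few outside because
   the ball of radius R0 holds m centres. Of the ~R0 / 3 such spheres with disjoint unit
   neighbourhoods, one meets O(k / R0) balls. Applying the fractal-dimension bound to a 1-net
   containing the centres gives k = O(R0^delta), so k / R0 = O(k^(1 - 1/delta)) for
   delta > 1, while for delta <= 1 the ball of radius 2 R0 holds only O(R0) centres. *)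

From Stdlib Require Import Lra Lia Psatz ZArith.
Open Scope R_scope.

(** * Euclidean distance on coordinate lists *)

Lemma Rabs_le_inv a b : Rabs a <= b -> - b <= a <= b.
Proof. pose proof (Rle_abs a); pose proof (Rle_abs (- a)); rewrite Rabs_Ropp in *; lra. Qed.

Fixpoint sq_dist (x y : list R) : R :=
  match x, y with a :: x', b :: y' => (a - b) ^ 2 + sq_dist x' y' | _, _ => 0 end.

Lemma dist_sq_dist x y : dist x y = sqrt (sq_dist x y).
Proof.
  unfold dist; f_equal; revert y.
  induction x as [|a x IH]; intros [|b y]; simpl; auto.
  now rewrite IH.
Qed.

Lemma sq_dist_ge0 x y : 0 <= sq_dist x y.
Proof.
  revert y; induction x as [|a x IH]; intros [|b y]; simpl; try lra.
  pose proof (IH y); pose proof (pow2_ge_0 (a - b)); lra.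
Qed.

Lemma sq_dist_sym x y : sq_dist x y = sq_dist y x.
Proof. revert y; induction x as [|a x IH]; intros [|b y]; simpl; auto. rewrite IH; ring. Qed.

Lemma sq_dist_diag x : sq_dist x x = 0.
Proof. induction x as [|a x IH]; simpl; auto. rewrite IH; ring. Qed.

Lemma dist_sym x y : dist x y = dist y x.
Proof. now rewrite !dist_sq_dist, sq_dist_sym. Qed.

Lemma dist_diag x : dist x x = 0.
Proof. now rewrite dist_sq_dist, sq_dist_diag, sqrt_0. Qed.

Lemma ball_center d a r : in_Rd d a -> 0 <= r -> ball d a r a.
Proof. intros ha hr; split; auto; rewrite dist_diag; lra. Qed.

Fixpoint inner_diff (x y z : list R) : R :=
  match x, y, z with
  | a :: x', b :: y', c :: z' => (a - b) * (b - c) + inner_diff x' y' z'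
  | _, _, _ => 0
  end.

Lemma sq_dist_split x y z : length x = length y -> length y = length z ->
  sq_dist x z = sq_dist x y + 2 * inner_diff x y z + sq_dist y z.
Proof.
  revert y z; induction x as [|a x IH]; intros [|b y] [|c z]; simpl; intros;
    try lra; try discriminate.
  rewrite (IH y z) by lia; ring.
Qed.

Lemma cauchy_schwarz_step a b p q1 q2 : 0 <= q1 -> 0 <= q2 -> p * p <= q1 * q2 ->
  (a * b + p) * (a * b + p) <= (a * a + q1) * (b * b + q2).
Proof.
  intros hq1 hq2 hp.
  (* AM-GM: [(2abp)^2 <= 4 a^2 b^2 q1 q2 <= (a^2 q2 + b^2 q1)^2] *)
  assert (hsq : (2 * a * b * p) ^ 2 <= (a * a * q2 + b * b * q1) ^ 2).
  { assert (0 <= (a * a * q2 - b * b * q1) ^ 2) by apply pow2_ge_0.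
    assert (0 <= (a * b) * (a * b)) by apply Rle_0_sqr. nra. }
  assert (2 * a * b * p <= a * a * q2 + b * b * q1).
  { assert (0 <= a * a * q2 + b * b * q1).
    { assert (0 <= a * a) by apply Rle_0_sqr; assert (0 <= b * b) by apply Rle_0_sqr; nra. }
    nra. }
  nra.
Qed.

Lemma inner_diff_sq_le x y z : length x = length y -> length y = length z ->
  inner_diff x y z * inner_diff x y z <= sq_dist x y * sq_dist y z.
Proof.
  revert y z; induction x as [|a x IH]; intros [|b y] [|c z]; simpl; intros;
    try lra; try discriminate.
  rewrite !Rmult_1_r.
  apply cauchy_schwarz_step; try apply sq_dist_ge0. apply IH; lia.
Qed.

Lemma dist_triangle x y z : length x = length y -> length y = length z ->
  dist x z <= dist x y + dist y z.
Proof.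
  intros hxy hyz; rewrite !dist_sq_dist.
  pose proof (sq_dist_ge0 x y) as h1; pose proof (sq_dist_ge0 y z) as h2.
  pose proof (sqrt_sqrt _ h1); pose proof (sqrt_sqrt _ h2).
  pose proof (sqrt_pos (sq_dist x y)); pose proof (sqrt_pos (sq_dist y z)).
  assert (hi : inner_diff x y z <= sqrt (sq_dist x y) * sqrt (sq_dist y z)).
  { rewrite <- sqrt_mult by auto.
    apply Rle_trans with (Rabs (inner_diff x y z)); [apply Rle_abs|].
    rewrite <- sqrt_Rsqr_abs; apply sqrt_le_1_alt; unfold Rsqr.
    now apply inner_diff_sq_le. }
  apply Rsqr_incr_0_var; [|lra].
  rewrite Rsqr_sqrt by apply sq_dist_ge0; unfold Rsqr.
  rewrite (sq_dist_split x y z) by auto. nra.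
Qed.

Fixpoint midpoint (a b : list R) : list R :=
  match a, b with x :: a', y :: b' => (x + y) / 2 :: midpoint a' b' | _, _ => [] end.

Lemma midpoint_length a b : length a = length b -> length (midpoint a b) = length a.
Proof.
  revert b; induction a as [|x a IH]; intros [|y b]; simpl; intros; try lia.
  rewrite IH; lia.
Qed.

Lemma dist_midpoint_l a b : dist a (midpoint a b) = dist a b / 2.
Proof.
  rewrite !dist_sq_dist.
  assert (e : sq_dist a (midpoint a b) = sq_dist a b / 2 ^ 2).
  { revert b; induction a as [|x a IH]; intros [|y b]; simpl; try lra.
    rewrite IH; field. }
  rewrite e, sqrt_div_alt, sqrt_pow2 by lra; auto.
Qed.

Lemma midpoint_sym a b : midpoint a b = midpoint b a.
Proof.
  revert b; induction a as [|x a IH]; intros [|y b]; simpl; auto.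
  now rewrite IH, Rplus_comm.
Qed.

Lemma disjoint_unit_balls_far d a b : in_Rd d a -> in_Rd d b ->
  ~ (exists y, ball d a 1 y /\ ball d b 1 y) -> 2 < dist a b.
Proof.
  intros ha hb hdisj.
  destruct (Rlt_dec 2 (dist a b)) as [|hab]; auto.
  assert (hma : dist a (midpoint a b) = dist a b / 2) by apply dist_midpoint_l.
  assert (hmb : dist b (midpoint a b) = dist a b / 2)
    by now rewrite midpoint_sym, dist_midpoint_l, dist_sym.
  exfalso; apply hdisj; exists (midpoint a b); unfold ball, in_Rd in *.
  rewrite midpoint_length by lia.
  repeat split; auto; lra.
Qed.

Lemma dist_le_of_coords_close h u v : 0 <= h ->
  Forall2 (fun a b => Rabs (a - b) <= h) u v -> dist u v <= sqrt (INR (length u)) * h.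
Proof.
  intros hh huv; rewrite dist_sq_dist, <- (sqrt_square h hh), <- sqrt_mult
    by (apply pos_INR || nra).
  apply sqrt_le_1_alt.
  induction huv as [|x y u v hxy _ IH]; [simpl; lra|].
  cbn [length sq_dist].
  rewrite S_INR.
  assert ((x - y) ^ 2 <= h * h).
  { rewrite <- pow2_abs; pose proof (Rabs_pos (x - y)); nra. }
  lra.
Qed.

Fixpoint l1_dist (x y : list R) : R :=
  match x, y with a :: x', b :: y' => Rabs (a - b) + l1_dist x' y' | _, _ => 0 end.

Lemma l1_dist_ge0 x y : 0 <= l1_dist x y.
Proof.
  revert y; induction x as [|a x IH]; intros [|b y]; simpl; try lra.
  pose proof (Rabs_pos (a - b)); pose proof (IH y); lra.
Qed.

Lemma l1_dist_sq_le x y : length x = length y ->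
  l1_dist x y * l1_dist x y <= INR (length x) * sq_dist x y.
Proof.
  revert y; induction x as [|a x IH]; intros [|b y] hl; try discriminate;
    [simpl; lra|].
  cbn [length l1_dist sq_dist] in *; specialize (IH y ltac:(lia)).
  pose proof (l1_dist_ge0 x y); pose proof (sq_dist_ge0 x y).
  rewrite S_INR, <- pow2_abs.
  pose proof (Rabs_pos (a - b)); pose proof (pos_INR (length x)).
  set (t := Rabs (a - b)) in *; set (s := l1_dist x y) in *;
  set (q := sq_dist x y) in *; set (n := INR (length x)) in *.
  assert (2 * t * s <= n * (t * t) + q).
  { destruct (Req_dec n 0) as [hn|hn].
    - rewrite hn in IH |- *; assert (s = 0) by nra; subst s; nra.
    - apply (Rmult_le_reg_l n); [lra|].
      assert (0 <= (n * t - s) * (n * t - s)) by apply Rle_0_sqr; nra. }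
  nra.
Qed.

Lemma l1_dist_le d x y : length x = d -> length y = d ->
  l1_dist x y <= sqrt (INR d) * dist x y.
Proof.
  intros hx hy; rewrite dist_sq_dist, <- sqrt_mult by (apply pos_INR || apply sq_dist_ge0).
  rewrite <- (sqrt_square (l1_dist x y)) by apply l1_dist_ge0.
  apply sqrt_le_1_alt; subst d; apply l1_dist_sq_le; congruence.
Qed.

(** * Lattice cells *)

Definition round (t : R) : Z := up (t - / 2).

Lemma round_spec t : t - / 2 < IZR (round t) <= t + / 2.
Proof. unfold round; destruct (archimed (t - / 2)); lra. Qed.

Fixpoint cell (h : R) (x c : list R) : list Z :=
  match x, c with a :: x', b :: c' => round ((a - b) / h) :: cell h x' c' | _, _ => [] end.

Lemma cell_length h x c : length x = length c -> length (cell h x c) = length x.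
Proof.
  revert c; induction x as [|a x IH]; intros [|b c]; simpl; intros; try lia.
  rewrite IH; lia.
Qed.

Lemma same_cell_coords_close h x x' c : 0 < h ->
  length x = length c -> length x' = length c -> cell h x c = cell h x' c ->
  Forall2 (fun a b => Rabs (a - b) <= h) x x'.
Proof.
  intros hh; revert x' c.
  induction x as [|a x IH]; intros [|a' x'] [|b c]; simpl; intros hx hx' e;
    try discriminate; constructor.
  - injection e as e _.
    pose proof (round_spec ((a - b) / h)); pose proof (round_spec ((a' - b) / h)).
    rewrite e in *.
    assert (hq : Rabs ((a - a') / h) <= 1)
      by (apply Rabs_le; replace ((a - a') / h) with ((a - b) / h - (a' - b) / h)
            by (field; lra); lra).
    unfold Rdiv in hq; rewrite Rabs_mult, Rabs_inv, (Rabs_right h) in hq by lra.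
    apply (Rmult_le_reg_r (/ h)); [apply Rinv_0_lt_compat; lra|].
    now rewrite Rinv_r by lra.
  - injection e as _ e; apply (IH x' c); auto; lia.
Qed.

Fixpoint l1_norm (y : list Z) : nat :=
  match y with [] => 0%nat | z :: y' => (Z.abs_nat z + l1_norm y')%nat end.

Lemma l1_norm_cell_le h x c : 0 < h -> length x = length c ->
  INR (l1_norm (cell h x c)) <= l1_dist x c / h + INR (length x) / 2.
Proof.
  intros hh; revert c.
  induction x as [|a x IH]; intros [|b c] hl; try discriminate; [simpl; lra|].
  cbn [cell l1_norm l1_dist length] in *; specialize (IH c ltac:(lia)).
  rewrite plus_INR, S_INR, INR_IZR_INZ, Nat2Z.inj_abs_nat, abs_IZR.
  pose proof (round_spec ((a - b) / h)).
  assert (Rabs (IZR (round ((a - b) / h))) <= Rabs ((a - b) / h) + / 2).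
  { pose proof (Rle_abs ((a - b) / h)); pose proof (Rle_abs (- ((a - b) / h))).
    rewrite Rabs_Ropp in *; apply Rabs_le; lra. }
  unfold Rdiv in *; rewrite Rabs_mult, Rabs_inv, (Rabs_right h) in * by lra.
  lra.
Qed.

Fixpoint zrange (L : nat) : list Z :=
  match L with
  | 0%nat => [0%Z]
  | S L' => Z.of_nat L :: (- Z.of_nat L)%Z :: zrange L'
  end.

Lemma in_zrange z L : (Z.abs_nat z <= L)%nat -> In z (zrange L).
Proof.
  induction L as [|L IH]; intros h; simpl.
  - left; lia.
  - destruct (Nat.eq_dec (Z.abs_nat z) (S L)).
    + destruct (Z_le_gt_dec 0 z); [left|right; left]; lia.
    + right; right; apply IH; lia.
Qed.

Fixpoint l1_lattice_ball (d L : nat) : list (list Z) :=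
  match d with
  | 0%nat => [[]]
  | S d' => flat_map (fun z => map (cons z) (l1_lattice_ball d' (L - Z.abs_nat z))) (zrange L)
  end.

Lemma in_l1_lattice_ball d : forall y L,
  length y = d -> (l1_norm y <= L)%nat -> In y (l1_lattice_ball d L).
Proof.
  induction d as [|d IH]; intros [|z y] L hl hy; simpl in *; try discriminate.
  - now left.
  - apply in_flat_map; exists z; split.
    + apply in_zrange; lia.
    + apply in_map, IH; lia.
Qed.

Lemma list_sum_map_le (A : Type) (f g : A -> nat) l :
  (forall x, In x l -> f x <= g x)%nat ->
  (list_sum (map f l) <= list_sum (map g l))%nat.
Proof.
  induction l as [|a l IH]; simpl; intros H; auto.
  specialize (H a (or_introl eq_refl)) as Ha.
  assert (list_sum (map f l) <= list_sum (map g l))%nat by (apply IH; auto). lia.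
Qed.

Lemma list_sum_map_mul (A : Type) (f : A -> nat) l c :
  list_sum (map (fun x => c * f x)%nat l) = (c * list_sum (map f l))%nat.
Proof. induction l; simpl; lia. Qed.

(* The geometric series behind the [2^L] factor. *)
Lemma zrange_weighted_sum L L' : (L <= L')%nat ->
  (list_sum (map (fun z => 2 ^ (L' - Z.abs_nat z)) (zrange L)) + 2 * 2 ^ (L' - L)
    <= 3 * 2 ^ L')%nat.
Proof.
  induction L as [|L IH]; intros h; simpl.
  - rewrite Nat.sub_0_r; lia.
  - rewrite SuccNat2Pos.id_succ.
    specialize (IH ltac:(lia)).
    replace (L' - L)%nat with (S (L' - S L)) in IH by lia; simpl in IH; lia.
Qed.

Lemma l1_lattice_ball_length d : forall L,
  (length (l1_lattice_ball d L) <= 3 ^ d * 2 ^ L)%nat.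
Proof.
  induction d as [|d IH]; intros L; simpl.
  - pose proof (Nat.pow_nonzero 2 L); lia.
  - rewrite length_flat_map.
    eapply Nat.le_trans.
    + apply (list_sum_map_le _ _ (fun z => 3 ^ d * 2 ^ (L - Z.abs_nat z))%nat).
      intros z _; rewrite length_map; apply IH.
    + rewrite list_sum_map_mul; pose proof (zrange_weighted_sum L L (le_n _)); nia.
Qed.

(** * Counting in lists *)

Definition decb {P : Prop} (H : {P} + {~ P}) : bool := if H then true else false.

Lemma decb_true {P : Prop} (H : {P} + {~ P}) : decb H = true <-> P.
Proof. unfold decb; destruct H; split; auto; discriminate. Qed.

Lemma NoDup_incl_filter_length (A : Type) (f : A -> bool) S L :
  NoDup S -> incl S L -> (forall x, In x S -> f x = true) ->
  (length S <= length (filter f L))%nat.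
Proof.
  intros hS hSL hf; apply NoDup_incl_length; auto.
  intros x hx; apply filter_In; auto.
Qed.

Lemma filter_length_mono (A : Type) (f g : A -> bool) L :
  (forall x, In x L -> f x = true -> g x = true) ->
  (length (filter f L) <= length (filter g L))%nat.
Proof.
  induction L as [|a L IH]; simpl; intros H; auto.
  specialize (IH (fun x hx => H x (or_intror hx))).
  specialize (H a (or_introl eq_refl)).
  destruct (f a), (g a); simpl; lia.
Qed.

Lemma filter_filter_length_le (A : Type) (f g : A -> bool) L :
  (length (filter f (filter g L)) <= length (filter f L))%nat.
Proof.
  induction L as [|a L IH]; simpl; auto.
  destruct (g a), (f a) eqn:e; simpl; try rewrite e; simpl; lia.
Qed.

Lemma length_le_1_of_constant (A : Type) (l : list A) :
  NoDup l -> (forall x y, In x l -> In y l -> x = y) -> (length l <= 1)%nat.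
Proof.
  intros hl heq; destruct l as [|a [|b l]]; simpl; try lia.
  inversion hl as [|? ? ha _]; subst.
  exfalso; apply ha; rewrite (heq a b); simpl; auto.
Qed.

Lemma length_le_fibers (A B : Type) (eqB : forall x y : B, {x = y} + {x <> y})
  (f : A -> B) (b : nat) (Y : list B) : forall S : list A,
  (forall y, (length (filter (fun x => decb (eqB (f x) y)) S) <= b)%nat) ->
  (forall x, In x S -> In (f x) Y) ->
  (length S <= length Y * b)%nat.
Proof.
  induction Y as [|y Y IH]; intros S hfib hY; simpl.
  - destruct S as [|x S]; simpl; auto. destruct (hY x (or_introl eq_refl)).
  - rewrite <- (filter_length (fun x => decb (eqB (f x) y)) S).
    enough (length (filter (fun x => negb (decb (eqB (f x) y))) S) <= length Y * b)%nat
      by (specialize (hfib y); lia).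
    apply IH.
    + intros y'; eapply Nat.le_trans; [apply filter_filter_length_le|apply hfib].
    + intros x hx; apply filter_In in hx as [hx hn].
      destruct (hY x hx) as [e|]; auto; subst y.
      unfold decb in hn; destruct (eqB (f x) (f x)); easy.
Qed.

Lemma sum_filter_lengths_le (A : Type) (p : nat -> A -> bool) (big : A -> bool)
  (js : list nat) (L : list A) :
  NoDup js ->
  (forall i j x, In i js -> In j js -> p i x = true -> p j x = true -> i = j) ->
  (forall j x, In j js -> p j x = true -> big x = true) ->
  (list_sum (map (fun j => length (filter (p j) L)) js) <= length (filter big L))%nat.
Proof.
  intros hjs hexcl hbig; induction L as [|x L IH]; simpl.
  - clear; induction js; simpl; lia.
  - assert (split : forall js',
      list_sum (map (fun j => length (if p j x then x :: filter (p j) L else filter (p j) L)) js')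
      = (length (filter (fun j => p j x) js') +
         list_sum (map (fun j => length (filter (p j) L)) js'))%nat).
    { induction js' as [|j js' IHj]; simpl; auto. destruct (p j x); simpl; lia. }
    rewrite split.
    assert (h1 : (length (filter (fun j => p j x) js) <= 1)%nat).
    { apply length_le_1_of_constant; [now apply NoDup_filter|].
      intros i j hi hj; apply filter_In in hi, hj; apply (hexcl i j x); tauto. }
    destruct (big x) eqn:hx; simpl; [lia|].
    destruct (filter (fun j => p j x) js) as [|j l] eqn:e; simpl; [lia|].
    assert (hj : In j (filter (fun j => p j x) js)) by (rewrite e; now left).
    apply filter_In in hj as [hj hpj].
    now rewrite (hbig j x hj hpj) in hx.
Qed.

Lemma list_argmax (A : Type) (g : A -> R) (L : list A) (a : A) : In a L ->
  exists x, In x L /\ forall y, In y L -> g y <= g x.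
Proof.
  revert a; induction L as [|b L IH]; intros a ha; [destruct ha|].
  destruct L as [|c L].
  - exists b; split; [now left|]. intros y [<-|[]]; lra.
  - destruct (IH c (or_introl eq_refl)) as [x [hx hmax]].
    destruct (Rle_dec (g b) (g x)).
    + exists x; split; [now right|]. intros y [<-|hy]; auto.
    + exists b; split; [now left|]. intros y [<-|hy]; [lra|]. specialize (hmax y hy); lra.
Qed.

Lemma list_argmin (A : Type) (g : A -> R) (L : list A) (a : A) : In a L ->
  exists x, In x L /\ forall y, In y L -> g x <= g y.
Proof.
  intros ha; destruct (list_argmax A (fun x => - g x) L a ha) as [x [hx hmin]].
  exists x; split; auto. intros y hy; specialize (hmin y hy); lra.
Qed.

Lemma at_most_weaken L Q m m' : at_most L Q m -> m <= m' -> at_most L Q m'.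
Proof. intros h hm S hS hSL hQ; specialize (h S hS hSL hQ); lra. Qed.

Lemma at_most_length L Q : at_most L Q (INR (length L)).
Proof. intros S hS hSL _; apply le_INR, NoDup_incl_length; auto. Qed.

Lemma at_most_filter L (Q : list R -> Prop) (f : list R -> bool) :
  (forall y, In y L -> Q y -> f y = true) -> at_most L Q (INR (length (filter f L))).
Proof.
  intros hf S hS hSL hQ; apply le_INR, NoDup_incl_filter_length; auto.
Qed.

Lemma at_most_missing L (Q : list R -> Prop) a : In a L -> ~ Q a ->
  at_most L Q (INR (length L) - 1).
Proof.
  intros ha hQa S hS hSL hQ.
  assert (hlt : (length S < length L)%nat).
  { apply Nat.le_lt_trans with (length (remove (list_eq_dec Req_EM_T) a L)).
    - apply NoDup_incl_length; auto.
      intros x hx; apply in_in_remove; auto. intros ->; auto.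
    - now apply remove_length_lt. }
  apply le_INR in hlt; rewrite S_INR in hlt. lra.
Qed.

(** * Nets *)

Definition separated (eps : R) (N : list (list R)) : Prop :=
  forall p q, In p N -> In q N -> p <> q -> eps <= dist p q.

Definition has_close (eps : R) (N : list (list R)) (p : list R) : bool :=
  existsb (fun q => decb (Rlt_dec (dist p q) eps)) N.

Lemma has_close_spec eps N p :
  has_close eps N p = true <-> exists q, In q N /\ dist p q < eps.
Proof.
  unfold has_close; rewrite existsb_exists.
  split; intros [q [hq h]]; exists q; split; auto; now apply decb_true in h + apply decb_true.
Qed.

Fixpoint greedy_net (eps : R) (N L : list (list R)) : list (list R) :=
  match L with
  | [] => N
  | p :: L' => greedy_net eps (if has_close eps N p then N else p :: N) L'
  end.

Lemma greedy_net_spec eps L : 0 <= eps -> forall N, separated eps N ->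
  separated eps (greedy_net eps N L) /\ incl N (greedy_net eps N L) /\
  incl (greedy_net eps N L) (N ++ L) /\
  (forall p, In p L -> exists q, In q (greedy_net eps N L) /\ dist p q <= eps).
Proof.
  intros heps; induction L as [|p L IH]; intros N hN; simpl.
  - rewrite app_nil_r; repeat split; auto using incl_refl. intros _ [].
  - set (N' := if has_close eps N p then N else p :: N).
    assert (hN' : separated eps N' /\ incl N N' /\ incl N' (p :: N) /\
                  exists q, In q N' /\ dist p q <= eps).
    { unfold N'; destruct (has_close eps N p) eqn:e.
      - apply has_close_spec in e as [q [hq hpq]].
        repeat split; auto using incl_refl, incl_tl.
        exists q; split; auto; lra.
      - assert (hfar : forall q, In q N -> eps <= dist p q).
        { intros q hq; destruct (Rlt_dec (dist p q) eps); [|lra].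
          assert (has_close eps N p = true) by (apply has_close_spec; eauto). congruence. }
        repeat split; auto using incl_refl, incl_tl.
        + intros a b [<-|ha] [<-|hb] hab; try congruence; auto.
          rewrite dist_sym; auto.
        + exists p; split; [now left|]; rewrite dist_diag; lra. }
    destruct hN' as [hsep [hinc [hsub [q [hq hpq]]]]].
    destruct (IH N' hsep) as [h1 [h2 [h3 h4]]].
    repeat split; auto.
    + intros x hx; apply h2, hinc, hx.
    + intros x hx; apply h3, in_app_or in hx as [hx|hx]; apply in_or_app.
      * apply hsub in hx as [<-|hx]; [right; now left|now left].
      * right; now right.
    + intros x [<-|hx]; [exists q; split; auto|auto].
Qed.

Lemma net_containing eps D P : 0 <= eps -> incl D P -> separated eps D ->
  exists N, is_net eps N P /\ incl D N.
Proof.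
  intros heps hDP hD.
  destruct (greedy_net_spec eps P heps D hD) as [h1 [h2 [h3 h4]]].
  exists (greedy_net eps D P); repeat split; auto.
  intros x hx; apply h3, in_app_or in hx as [hx|hx]; auto.
Qed.

(** * The least dense ball *)

Definition within (q : list R) (rho : R) (x : list R) : bool :=
  decb (Rle_dec (dist q x) rho).

Lemma within_spec q rho x : within q rho x = true <-> dist q x <= rho.
Proof. apply decb_true. Qed.

Section DenseBall.

Variable D : list (list R).
Hypothesis D_nodup : NoDup D.
Hypothesis D_far : forall a b, In a D -> In b D -> a <> b -> 2 < dist a b.

Definition count_within (q : list R) (rho : R) : nat := length (filter (within q rho) D).

Lemma count_within_farthest a : In a D ->
  exists x, In x D /\ count_within a (dist a x) = length D.
Proof.
  intros ha; destruct (list_argmax _ (dist a) D a ha) as [x [hx hmax]].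
  exists x; split; auto; unfold count_within; f_equal.
  apply forallb_filter_id, forallb_forall; intros y hy; apply within_spec; auto.
Qed.

Lemma count_within_witness q rho m : (1 <= m)%nat -> (m <= count_within q rho)%nat ->
  exists x, In x D /\ dist q x <= rho /\ (m <= count_within q (dist q x))%nat.
Proof.
  intros hm hcnt; unfold count_within in *.
  destruct (filter (within q rho) D) as [|x0 F] eqn:e; [simpl in hcnt; lia|].
  assert (hx0 : In x0 (filter (within q rho) D)) by (rewrite e; now left).
  destruct (list_argmax _ (dist q) _ x0 hx0) as [x [hx hmax]].
  apply filter_In in hx as [hx hxr]; apply within_spec in hxr.
  exists x; repeat split; auto.
  rewrite <- e in hcnt; eapply Nat.le_trans; [apply hcnt|].
  apply filter_length_mono; intros y hy hyr; apply within_spec, hmax, filter_In; auto.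
Qed.

Lemma radius_gt_2_of_count q rho : In q D -> (2 <= count_within q rho)%nat -> 2 < rho.
Proof.
  intros hq hcnt; unfold count_within in hcnt.
  destruct (filter (within q rho) D) as [|x [|y F]] eqn:e; simpl in hcnt; try lia.
  assert (hxy : In x (filter (within q rho) D) /\ In y (filter (within q rho) D))
    by (rewrite e; simpl; auto).
  assert (x <> y).
  { intros <-; pose proof (NoDup_filter (within q rho) D_nodup) as hnd.
    rewrite e in hnd; inversion hnd; simpl in *; tauto. }
  destruct hxy as [hx hy]; apply filter_In in hx as [hx hxr], hy as [hy hyr].
  apply within_spec in hxr, hyr.
  destruct (list_eq_dec Req_EM_T x q) as [->|hxq].
  - specialize (D_far q y hq hy ltac:(auto)); lra.
  - specialize (D_far q x hq hx ltac:(auto)); lra.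
Qed.

Lemma minimal_dense_radius m : (2 <= m)%nat -> (m <= length D)%nat ->
  exists q R0, In q D /\ (m <= count_within q R0)%nat /\ 2 < R0 /\
    forall q' rho, In q' D -> rho < R0 -> (count_within q' rho < m)%nat.
Proof.
  intros hm hmD.
  set (dense := fun pq : list R * list R =>
    Nat.leb m (count_within (fst pq) (dist (fst pq) (snd pq)))).
  set (cands := filter dense (list_prod D D)).
  assert (hdense : forall q x, In q D -> In x D ->
            (m <= count_within q (dist q x))%nat -> In (q, x) cands).
  { intros q x hq hx h; apply filter_In; split; [now apply in_prod|].
    now apply Nat.leb_le. }
  assert (exists a0, In a0 D) as [a0 ha0]
    by (destruct D as [|a D']; [simpl in hmD; lia|exists a; now left]).
  destruct (count_within_farthest a0 ha0) as [x0 [hx0 hcnt0]].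
  assert (hc0 : In (a0, x0) cands) by (apply hdense; auto; lia).
  destruct (list_argmin _ (fun pq => dist (fst pq) (snd pq)) cands _ hc0)
    as [[q x] [hqx hmin]].
  apply filter_In in hqx as [hqx hqxd]; apply in_prod_iff in hqx as [hq hx].
  apply Nat.leb_le in hqxd; simpl in hqxd.
  exists q, (dist q x); repeat split; auto.
  - apply (radius_gt_2_of_count q); auto; lia.
  - intros q' rho hq' hrho.
    destruct (Nat.lt_ge_cases (count_within q' rho) m) as [|hge]; auto.
    destruct (count_within_witness q' rho m ltac:(lia) hge) as [y [hy [hyr hym]]].
    specialize (hmin _ (hdense q' y hq' hy hym)); simpl in hmin; lra.
Qed.

End DenseBall.

Section LatticeCover.

Variables (d : nat) (D : list (list R)).
Hypothesis D_nodup : NoDup D.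
Hypothesis D_dim : forall x, In x D -> in_Rd d x.

Lemma same_cell_dist_le h c x x' : 0 < h -> in_Rd d c -> in_Rd d x -> in_Rd d x' ->
  cell h x c = cell h x' c -> dist x x' <= sqrt (INR d) * h.
Proof.
  unfold in_Rd; intros hh hc hx hx' e.
  rewrite <- hx; apply dist_le_of_coords_close; [lra|].
  apply (same_cell_coords_close h x x' c); auto; congruence.
Qed.

Lemma cell_l1_norm_le h c x rho : 0 < h -> in_Rd d c -> in_Rd d x -> dist c x <= rho ->
  INR (l1_norm (cell h x c)) <= sqrt (INR d) * rho / h + INR d / 2.
Proof.
  unfold in_Rd; intros hh hc hx hcx.
  eapply Rle_trans; [apply l1_norm_cell_le; auto; congruence|].
  rewrite hx; apply Rplus_le_compat_r; unfold Rdiv; apply Rmult_le_compat_r;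
    [left; now apply Rinv_0_lt_compat|].
  eapply Rle_trans; [apply (l1_dist_le d); auto|].
  rewrite dist_sym; apply Rmult_le_compat_l; [apply sqrt_pos|auto].
Qed.

(* Cut the ball of radius [2 R0] into lattice cells of diameter [R0 / 2]: each cell holds
   fewer than [m] points, and there are [2^O(d)] cells. *)
Lemma dense_ball_cover q R0 m : (1 <= d)%nat -> In q D -> 0 < R0 ->
  (forall q' rho, In q' D -> rho < R0 -> (count_within D q' rho < m)%nat) ->
  (count_within D q (2 * R0) <= length (l1_lattice_ball d (5 * d)) * (m - 1))%nat.
Proof.
  intros hd hq hR hsparse.
  set (s := sqrt (INR d)).
  assert (hs : 0 < s) by (apply sqrt_lt_R0, lt_0_INR; lia).
  assert (hss : s * s = INR d) by (apply sqrt_sqrt, pos_INR).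
  set (h := R0 / (2 * s)).
  assert (hh : 0 < h) by (unfold h; apply Rdiv_lt_0_compat; lra).
  apply (length_le_fibers _ _ (list_eq_dec Z.eq_dec) (fun x => cell h x q)).
  - intros y; set (F := filter _ _).
    destruct F as [|x0 F'] eqn:eF; [simpl; lia|]; rewrite <- eF.
    assert (hF : forall x, In x F -> In x D /\ cell h x q = y).
    { intros x hx; unfold F in hx; rewrite filter_In, decb_true, filter_In in hx; tauto. }
    destruct (hF x0) as [hx0 hx0y]; [rewrite eF; now left|].
    enough (length F <= count_within D x0 (R0 / 2))%nat
      by (specialize (hsparse x0 (R0 / 2) hx0 ltac:(lra)); lia).
    apply NoDup_incl_filter_length; [now apply NoDup_filter, NoDup_filter|
      intros x hx; now apply hF|].
    intros x hx; apply within_spec; destruct (hF x hx) as [hxD hxy].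
    eapply Rle_trans; [apply (same_cell_dist_le h q); auto; congruence|].
    fold s; unfold h; apply Req_le; field; lra.
  - intros x hx; apply filter_In in hx as [hxD hxq]; apply within_spec in hxq.
    apply in_l1_lattice_ball; [rewrite cell_length; apply D_dim in hxD, hq; congruence|].
    apply INR_le; eapply Rle_trans; [apply (cell_l1_norm_le h q x (2 * R0)); auto|].
    fold s; unfold h; rewrite mult_INR; simpl (INR 5).
    replace (s * (2 * R0) / (R0 / (2 * s))) with (4 * (s * s)) by (field; lra).
    pose proof (pos_INR d); lra.
Qed.

End LatticeCover.

(** * A sparse sphere *)

Lemma nat_floor x : 0 <= x -> exists n : nat, INR n <= x < INR n + 1.
Proof.
  intros hx; destruct (base_Int_part x) as [h1 h2].
  assert (h0 : (-1 < Int_part x)%Z) by (apply lt_IZR; lra).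
  exists (Z.to_nat (Int_part x)); rewrite INR_IZR_INZ, Z2Nat.id by lia; lra.
Qed.

Lemma nat_eq_of_close (i j : nat) a b :
  Rabs (a - (b + 3 * INR i)) <= 1 -> Rabs (a - (b + 3 * INR j)) <= 1 -> i = j.
Proof.
  intros hi hj; apply Rabs_le_inv in hi, hj.
  destruct (Nat.lt_total i j) as [h|[h|h]]; auto; apply le_INR in h; rewrite S_INR in h; lra.
Qed.

Lemma length_mul_le_list_sum (A : Type) (f : A -> nat) c l :
  (forall x, In x l -> c <= f x)%nat -> (length l * c <= list_sum (map f l))%nat.
Proof.
  induction l as [|a l IH]; simpl; intros H; [lia|].
  specialize (IH (fun x hx => H x (or_intror hx))); specialize (H a (or_introl eq_refl)); lia.
Qed.

Definition near_sphere (q : list R) (r : R) (x : list R) : bool :=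
  decb (Rle_dec (Rabs (dist q x - r)) 1).

Lemma near_sphere_spec q r x : near_sphere q r x = true <-> Rabs (dist q x - r) <= 1.
Proof. apply decb_true. Qed.

Lemma ball_meets_sphere_near d c r a : in_Rd d c -> in_Rd d a ->
  ball_meets_sphere d c r a -> near_sphere c r a = true.
Proof.
  unfold in_Rd; intros hc ha [y [[hy hay] [_ hcy]]]; apply near_sphere_spec.
  pose proof (dist_triangle c y a ltac:(congruence) ltac:(congruence)).
  pose proof (dist_triangle c a y ltac:(congruence) ltac:(congruence)).
  rewrite (dist_sym y a) in *; apply Rabs_le; lra.
Qed.

(* Among the [J ~ R0 / 3] spheres of radii [R0 + 1 + 3 j], whose unit neighbourhoods are
   disjoint and lie in the ball of radius [2 R0], one meets at most a [1 / J] fraction of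
   that ball's points. *)
Lemma exists_sparse_sphere D q R0 : 2 <= R0 ->
  exists r, R0 + 1 <= r <= 2 * R0 - 1 /\
    R0 * INR (length (filter (near_sphere q r) D)) <= 6 * INR (count_within D q (2 * R0)).
Proof.
  intros hR.
  destruct (nat_floor ((R0 + 1) / 3)) as [J [hJ1 hJ2]]; [lra|].
  assert (hJ : 1 <= INR J)
    by (destruct J; [simpl in hJ2; lra|rewrite S_INR; pose proof (pos_INR J); lra]).
  set (radius := fun j : nat => R0 + 1 + 3 * INR j).
  set (cnt := fun j => length (filter (near_sphere q (radius j)) D)).
  assert (hsum : (list_sum (map cnt (seq 0 J)) <= count_within D q (2 * R0))%nat).
  { apply sum_filter_lengths_le; [apply seq_NoDup| |].
    - intros i j x _ _ hi hj; apply near_sphere_spec in hi, hj; unfold radius in *.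
      exact (nat_eq_of_close i j (dist q x) (R0 + 1) hi hj).
    - intros j x hj hx; apply near_sphere_spec, Rabs_le_inv in hx; apply within_spec.
      apply in_seq in hj; assert (INR j + 1 <= INR J) by (rewrite <- S_INR; apply le_INR; lia).
      unfold radius in hx; lra. }
  assert (h0J : In 0%nat (seq 0 J)) by (apply in_seq; split; [lia|apply INR_lt; simpl; lra]).
  destruct (list_argmin _ (fun j => INR (cnt j)) _ _ h0J) as [j [hj hmin]].
  exists (radius j); split.
  - apply in_seq in hj; assert (INR j + 1 <= INR J) by (rewrite <- S_INR; apply le_INR; lia).
    unfold radius; pose proof (pos_INR j); lra.
  - assert (hJc : (J * cnt j <= count_within D q (2 * R0))%nat).
    { eapply Nat.le_trans; [|exact hsum]; rewrite <- (length_seq J 0) at 1.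
      apply length_mul_le_list_sum; intros i hi; apply INR_le, hmin, hi. }
    apply le_INR in hJc; rewrite mult_INR in hJc; fold (cnt j).
    assert (R0 <= 6 * INR J) by (destruct (Rle_dec R0 6); lra).
    pose proof (pos_INR (cnt j)); nra.
Qed.

(** * The separator *)

Lemma l1_lattice_ball_5d_lt d : (1 <= d)%nat ->
  (length (l1_lattice_ball d (5 * d)) < 2 ^ (8 * d))%nat.
Proof.
  intros hd; eapply Nat.le_lt_trans; [apply l1_lattice_ball_length|].
  assert (h3 : (3 ^ d <= 2 ^ (2 * d))%nat)
    by (rewrite Nat.pow_mul_r; apply Nat.pow_le_mono_l; simpl; lia).
  replace (8 * d)%nat with (2 * d + 5 * d + d)%nat by lia.
  rewrite !Nat.pow_add_r.
  assert (h2 : (2 <= 2 ^ d)%nat) by (apply (Nat.pow_le_mono_r 2 1 d); lia).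
  assert (h0 : (0 < 2 ^ (2 * d) * 2 ^ (5 * d))%nat)
    by (apply Nat.mul_pos_pos; apply Nat.neq_0_lt_0, Nat.pow_nonzero; lia).
  apply (Nat.mul_le_mono_r _ _ (2 ^ (5 * d))) in h3.
  apply (Nat.mul_le_mono_l _ _ (2 ^ (2 * d) * 2 ^ (5 * d))) in h2.
  lia.
Qed.

Lemma Rpower_pos x y : 0 < Rpower x y.
Proof. apply exp_pos. Qed.

Lemma Rpower_le_self x delta : 1 <= x -> 0 < delta -> delta <= 1 -> Rpower x delta <= x.
Proof.
  intros hx h0 h1; rewrite <- (Rpower_1 x) at 2 by lra; apply Rle_Rpower; lra.
Qed.

(* If [k] points sit in a ball of radius [R0] of a set of dimension [delta], then
   [k / R0 <= A^(1/delta) k^(1 - 1/delta)]. *)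
Lemma count_div_radius_le k R0 A delta n : 0 <= k -> 0 < R0 -> 0 < A -> 0 < delta ->
  k <= A * Rpower R0 delta -> R0 * n <= 6 * k ->
  n <= 6 * Rpower A (/ delta) * Rpower k (1 - 1 / delta).
Proof.
  intros hk hR hA hdelta hgrowth hn.
  pose proof (Rpower_pos A (/ delta)); pose proof (Rpower_pos k (1 - 1 / delta)).
  destruct (Req_dec k 0) as [->|hk0].
  { assert (n <= 0) by nra. nra. }
  assert (hroot : Rpower k (/ delta) <= Rpower A (/ delta) * R0).
  { eapply Rle_trans.
    - apply Rle_Rpower_l; [left; now apply Rinv_0_lt_compat|split; [lra|exact hgrowth]].
    - rewrite <- Rpower_mult_distr, Rpower_mult by (try apply Rpower_pos; lra).
      rewrite Rinv_r, Rpower_1 by lra; lra. }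
  assert (hsplit : k = Rpower k (1 - 1 / delta) * Rpower k (/ delta)).
  { rewrite <- Rpower_plus; replace (1 - 1 / delta + / delta) with 1 by (field; lra).
    rewrite Rpower_1; lra. }
  apply (Rmult_le_reg_l R0); [lra|].
  rewrite hsplit in hn; nra.
Qed.

Definition crossing_const (d : nat) (delta c0 : R) : R :=
  INR (2 ^ (8 * d)) + 12 * Rabs c0 + 6 * Rpower (INR (2 ^ (8 * d)) * Rabs c0 + 1) (/ delta).

Lemma crossing_const_ge d delta c0 : INR (2 ^ (8 * d)) <= crossing_const d delta c0.
Proof.
  unfold crossing_const; pose proof (Rabs_pos c0).
  pose proof (Rpower_pos (INR (2 ^ (8 * d)) * Rabs c0 + 1) (/ delta)); lra.
Qed.

Lemma H_bound_ge CH delta k : 0 < CH -> 1 <= k -> CH <= H_bound CH delta k.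
Proof.
  intros hCH hk; unfold H_bound; destruct (Rlt_dec 1 delta) as [hd|]; [|lra].
  rewrite <- (Rmult_1_r CH) at 1; apply Rmult_le_compat_l; [lra|].
  apply Rle_trans with (Rpower k 0); [rewrite Rpower_O; lra|].
  apply Rle_Rpower; [lra|].
  assert (1 / delta < 1) by (apply (Rmult_lt_reg_l delta); [lra|]; field_simplify; lra).
  lra.
Qed.

Lemma mul_div_le_frac M k : (0 < M)%nat ->
  INR ((M - 1) * (k / M)) <= (1 - / INR M) * INR k.
Proof.
  intros hM; pose proof (Nat.Div0.mul_div_le k M) as hdiv.
  apply le_INR in hdiv; rewrite mult_INR in hdiv.
  assert (hM' : 0 < INR M) by now apply lt_0_INR.
  rewrite mult_INR, minus_INR by lia; simpl (INR 1).
  replace ((1 - / INR M) * INR k) with ((INR M - 1) * (INR k / INR M)) by (field; lra).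
  apply Rmult_le_compat_l; [apply (le_INR 1) in hM; simpl in hM; lra|].
  apply (Rmult_le_reg_l (INR M)); [lra|].
  replace (INR M * (INR k / INR M)) with (INR k) by (field; lra); lra.
Qed.

Lemma sub_succ_div_lt_frac M k : (0 < M)%nat ->
  INR k - INR (k / M + 1) < (1 - / INR M) * INR k.
Proof.
  intros hM; pose proof (Nat.mul_succ_div_gt k M ltac:(lia)) as hdiv.
  apply lt_INR in hdiv; rewrite mult_INR, S_INR in hdiv.
  assert (hM' : 0 < INR M) by now apply lt_0_INR.
  rewrite plus_INR; simpl (INR 1).
  replace ((1 - / INR M) * INR k) with (INR k - INR k / INR M) by (field; lra).
  enough (INR k / INR M < INR (k / M) + 1) by lra.
  apply (Rmult_lt_reg_l (INR M)); [lra|].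
  replace (INR M * (INR k / INR M)) with (INR k) by (field; lra); lra.
Qed.

Section LargeCase.

Variables (d : nat) (delta c0 : R) (P D : list (list R)).
Hypothesis d_pos : (1 <= d)%nat.
Hypothesis delta_pos : 0 < delta.
Hypothesis P_dim : forall p, In p P -> in_Rd d p.
Hypothesis P_frac : frac_bound d delta c0 P.
Hypothesis D_nodup : NoDup D.
Hypothesis D_incl : incl D P.
Hypothesis D_far : forall a b, In a D -> In b D -> a <> b -> 2 < dist a b.

Let D_dim x : In x D -> in_Rd d x.
Proof. auto. Qed.

(* [D] is [1]-separated, so it extends to a [1]-net of [P] to which [frac_bound] applies. *)
Lemma count_within_frac_bound q r : in_Rd d q -> 2 <= r ->
  INR (count_within D q r) <= c0 * Rpower r delta.
Proof.
  intros hq hr.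
  assert (hsep : separated 1 D) by (intros a b ha hb hab; specialize (D_far a b ha hb hab); lra).
  destruct (net_containing 1 D P ltac:(lra) D_incl hsep) as [N [hN hDN]].
  replace r with (r / 1) at 2 by field.
  apply (P_frac 1 r N q ltac:(lra) ltac:(lra) hN hq).
  - now apply NoDup_filter.
  - intros x hx; apply filter_In in hx; apply hDN; tauto.
  - intros x hx; apply filter_In in hx as [hx hxr]; apply within_spec in hxr.
    split; auto.
Qed.

Lemma sphere_count_le q R0 n : In q D -> 2 < R0 ->
  R0 * INR n <= 6 * INR (count_within D q (2 * R0)) ->
  INR (length D) <= INR (2 ^ (8 * d)) * INR (count_within D q R0) ->
  INR n <= H_bound (crossing_const d delta c0) delta (INR (length D)).
Proof.
  intros hq hR hn hk.
  pose proof (Rabs_pos c0); pose proof (pos_INR (2 ^ (8 * d))); pose proof (pos_INR n).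
  unfold H_bound, crossing_const; destruct (Rlt_dec 1 delta) as [hdelta|hdelta].
  - assert (hB : INR (count_within D q (2 * R0)) <= INR (length D))
      by apply le_INR, filter_length_le.
    pose proof (count_within_frac_bound q R0 (D_dim q hq) ltac:(lra)) as hfrac.
    pose proof (Rpower_pos R0 delta).
    assert (c0 * Rpower R0 delta <= Rabs c0 * Rpower R0 delta)
      by (apply Rmult_le_compat_r; [lra|apply Rle_abs]).
    assert (hgrowth : INR (length D) <= (INR (2 ^ (8 * d)) * Rabs c0 + 1) * Rpower R0 delta)
      by nra.
    pose proof (count_div_radius_le (INR (length D)) R0 (INR (2 ^ (8 * d)) * Rabs c0 + 1)
                  delta (INR n) (pos_INR _) ltac:(lra) ltac:(nra) delta_pos hgrowth ltac:(lra)).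
    pose proof (Rpower_pos (INR (2 ^ (8 * d)) * Rabs c0 + 1) (/ delta)).
    pose proof (Rpower_pos (INR (length D)) (1 - 1 / delta)); nra.
  - pose proof (count_within_frac_bound q (2 * R0) (D_dim q hq) ltac:(lra)) as hfrac.
    assert (c0 * Rpower (2 * R0) delta <= Rabs c0 * (2 * R0)).
    { eapply Rle_trans; [apply Rmult_le_compat_r; [left; apply Rpower_pos|apply Rle_abs]|].
      apply Rmult_le_compat_l; [lra|apply Rpower_le_self; lra]. }
    pose proof (Rpower_pos (INR (2 ^ (8 * d)) * Rabs c0 + 1) (/ delta)).
    assert (INR n <= 12 * Rabs c0) by nra.
    lra.
Qed.

Lemma large_case_separator : (2 ^ (8 * d) < length D)%nat ->
  exists c r, in_Rd d c /\ 0 < r /\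
    at_most D (ball_meets_sphere d c r)
      (H_bound (crossing_const d delta c0) delta (INR (length D))) /\
    at_most D (ball_inside d c r) ((1 - / INR (2 ^ (8 * d))) * INR (length D)) /\
    at_most D (ball_outside d c r) ((1 - / INR (2 ^ (8 * d))) * INR (length D)).
Proof.
  intros hk.
  set (M := (2 ^ (8 * d))%nat) in *; set (k := length D) in *.
  assert (hM : (0 < M)%nat) by (apply Nat.neq_0_lt_0, Nat.pow_nonzero; lia).
  assert (hM2 : (2 <= M)%nat) by (apply (Nat.pow_le_mono_r 2 1); lia).
  set (m := (k / M + 1)%nat).
  assert (hm : (2 <= m)%nat) by (pose proof (Nat.div_str_pos k M ltac:(lia)); lia).
  assert (hmk : (m <= k)%nat) by (pose proof (Nat.div_lt k M ltac:(lia) ltac:(lia)); lia).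
  destruct (minimal_dense_radius D D_nodup D_far m hm hmk)
    as [q [R0 [hq [hdense [hR0 hsparse]]]]].
  assert (hB : (count_within D q (2 * R0) <= (M - 1) * (m - 1))%nat).
  { eapply Nat.le_trans; [apply (dense_ball_cover d D D_nodup D_dim q R0 m); auto; lra|].
    apply Nat.mul_le_mono_r; pose proof (l1_lattice_ball_5d_lt d d_pos); lia. }
  replace (m - 1)%nat with (k / M)%nat in hB by lia.
  destruct (exists_sparse_sphere D q R0 ltac:(lra)) as [r [hr hsphere]].
  exists q, r; repeat split; [now apply D_dim|lra| | |].
  - eapply at_most_weaken.
    + apply (at_most_filter _ _ (near_sphere q r)); intros a ha.
      apply ball_meets_sphere_near; auto.
    + apply (sphere_count_le q R0); auto.
      rewrite <- mult_INR; apply le_INR.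
      pose proof (Nat.mul_succ_div_gt k M ltac:(lia)).
      apply Nat.mul_le_mono_l with (p := M) in hdense; unfold m in hdense; lia.
  - eapply at_most_weaken.
    + apply (at_most_filter _ _ (within q (2 * R0))); intros a ha hin.
      apply within_spec; specialize (hin a (ball_center d a 1 (D_dim a ha) ltac:(lra))).
      lra.
    + eapply Rle_trans; [apply le_INR, hB|]; now apply mul_div_le_frac.
  - eapply at_most_weaken.
    + apply (at_most_filter _ _ (fun x => negb (within q R0 x))); intros a ha hout.
      specialize (hout a (ball_center d a 1 (D_dim a ha) ltac:(lra))).
      destruct (within q R0 a) eqn:e; auto; apply within_spec in e; lra.
    + pose proof (filter_length (within q R0) D) as hsplit.
      fold (count_within D q R0) k in hsplit.
      assert (hout : (length (filter (fun x => negb (within q R0 x)) D) <= k - m)%nat) by lia.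
      apply le_INR in hout; rewrite minus_INR in hout by lia.
      pose proof (sub_succ_div_lt_frac M k hM) as hfrac; fold m in hfrac; lra.
Qed.

End LargeCase.

Lemma exists_at_unit_dist d a : (1 <= d)%nat -> in_Rd d a ->
  exists y, in_Rd d y /\ dist a y = 1.
Proof.
  unfold in_Rd; intros hd ha; destruct a as [|x t]; [simpl in ha; lia|].
  exists ((x + 1) :: t); split; auto.
  rewrite dist_sq_dist; cbn [sq_dist]; rewrite sq_dist_diag.
  replace ((x - (x + 1)) ^ 2 + 0) with 1 by ring; apply sqrt_1.
Qed.

Lemma H_bound_nonneg CH delta k : 0 <= CH -> 0 <= H_bound CH delta k.
Proof.
  intros hCH; unfold H_bound; destruct (Rlt_dec 1 delta); [|lra].
  pose proof (Rpower_pos k (1 - 1 / delta)); nra.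
Qed.

(* Few balls: a unit sphere around one of them splits off that ball. *)
Lemma small_case_separator d delta CH M D : (1 <= d)%nat ->
  (forall x, In x D -> in_Rd d x) -> 0 < M -> INR (length D) <= M -> M <= CH ->
  exists c r, in_Rd d c /\ 0 < r /\
    at_most D (ball_meets_sphere d c r) (H_bound CH delta (INR (length D))) /\
    at_most D (ball_inside d c r) ((1 - / M) * INR (length D)) /\
    at_most D (ball_outside d c r) ((1 - / M) * INR (length D)).
Proof.
  intros hd hdim hM hkM hCH.
  destruct D as [|a D'] eqn:eD.
  - exists (repeat 0 d), 1; repeat split; [apply repeat_length|lra| | |];
      (eapply at_most_weaken; [apply at_most_length|]); simpl (INR (length [])).
    + apply H_bound_nonneg; lra.
    + lra.
    + lra.
  - rewrite <- eD in *.
    assert (ha : In a D) by (rewrite eD; now left).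
    assert (hk : 1 <= INR (length D))
      by (rewrite eD; simpl length; rewrite S_INR; pose proof (pos_INR (length D')); lra).
    assert (hfrac : INR (length D) - 1 <= (1 - / M) * INR (length D)).
    { enough (INR (length D) / M <= 1) by (unfold Rdiv in *; nra).
      apply (Rmult_le_reg_l M); [lra|]; field_simplify; lra. }
    destruct (exists_at_unit_dist d a hd (hdim a ha)) as [y [hy hay]].
    exists a, 1; repeat split; [now apply hdim|lra| | |].
    + eapply at_most_weaken; [apply at_most_length|].
      eapply Rle_trans; [|apply H_bound_ge]; lra.
    + eapply at_most_weaken; [apply (at_most_missing _ _ a ha)|exact hfrac].
      intros hin; specialize (hin y (conj hy (Req_le _ _ hay))); lra.
    + eapply at_most_weaken; [apply (at_most_missing _ _ a ha)|exact hfrac].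
      intros hout; specialize (hout a (ball_center d a 1 (hdim a ha) ltac:(lra))).
      rewrite dist_diag in hout; lra.
Qed.

Lemma Rpower_two_neg_8d d : Rpower 2 (- (8 * INR d)) = / INR (2 ^ (8 * d)).
Proof.
  rewrite Rpower_Ropp, pow_INR, <- Rpower_pow by (simpl; lra).
  rewrite mult_INR; simpl (INR 2); simpl (INR 8); do 3 f_equal; ring.
Qed.

Theorem theorem11 :
  exists C0 : R, 0 < C0 /\
  forall (d : nat) (delta c0 : R),
    (2 <= d)%nat -> 0 < delta -> delta <= INR d ->
    exists CH : R, 0 < CH /\
    forall (P : list (list R)) (Dp : list (list R)),
      NoDup P -> (forall p, In p P -> in_Rd d p) ->
      frac_bound d delta c0 P ->
      NoDup Dp -> incl Dp P ->
      (forall a b, In a Dp -> In b Dp -> a <> b ->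
         ~ exists y, ball d a 1 y /\ ball d b 1 y) ->
      let k := INR (length Dp) in
      exists (c : list R) (r : R),
        in_Rd d c /\ 0 < r /\
        at_most Dp (ball_meets_sphere d c r) (H_bound CH delta k) /\
        at_most Dp (ball_inside d c r) ((1 - Rpower 2 (- (C0 * INR d))) * k) /\
        at_most Dp (ball_outside d c r) ((1 - Rpower 2 (- (C0 * INR d))) * k).
Proof.
  exists 8; split; [lra|].
  intros d delta c0 hd hdelta _.
  assert (hM : 1 <= INR (2 ^ (8 * d)))
    by (apply (le_INR 1), Nat.neq_0_lt_0, Nat.pow_nonzero; lia).
  exists (crossing_const d delta c0).
  pose proof (crossing_const_ge d delta c0); split; [lra|].
  intros P D _ hP hfrac hD hDP hdisj k; unfold k; rewrite Rpower_two_neg_8d.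
  assert (hdim : forall x, In x D -> in_Rd d x) by auto.
  assert (hfar : forall a b, In a D -> In b D -> a <> b -> 2 < dist a b)
    by (intros a b ha hb hab; apply (disjoint_unit_balls_far d); auto).
  destruct (le_lt_dec (length D) (2 ^ (8 * d))) as [hsmall|hlarge].
  - apply small_case_separator; auto; [lia|lra|now apply le_INR].
  - apply (large_case_separator d delta c0 P D); auto; lia.
Qed.
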